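(* Let $X$ be a completely regular Hausdorff space and let $A(X)$ be an adequate subspace of $C(X)$, with $A(X)$-compactification $\mathcal{A}X$. Let $x_0\in\mathcal{A}X$, $f\in A(X)$, and let $U$ be a neighborhood of $x_0(f)$ in $[-\infty,\infty]$; set $V=\{x\in\mathcal{A}X: x(f)\in U\}$. Then there exists $h\in A(X)$ with $0\le h\le 1_X$ and $x_0(h)=0$ such that $W=\{x\in\mathcal{A}X: x(h)<1\}\subseteq V$.
   Context: All functions are real-valued; $C(X)$ is the space of continuous real functions on $X$ and $1_X$ the constant function $1$. A subspace $A(X)\subseteq C(X)$ separates points from closed sets if for every $x\in X$ and closed $F\subseteq X$ with $x\notin F$ there is $f\in A(X)$ with $f(x)=1$ and $f=0$ on $F$. $A(X)$ is adequate if (a) it separates points from closed sets and contains the constant functions; (b) there is a continuous nondecreasing $g:\mathbb{R}\to\mathbb{R}$ with $g(t)=0$ for $t\le 0$ and $g(t)=1$ for $t\ge1$ such that $g\circ f\in A(X)$ for all $f\in A(X)$; (c) every $f\in A(X)$ can be written $f=f_1-f_2$ with $f_1,f_2\in A(X)$ nonnegative. The $A(X)$-compactification: let $[-\infty,\infty]$ carry the order topology; the map $i:X\to[-\infty,\infty]^{A(X)}$, $i(x)(\varphi)=\varphi(x)$, is a homeomorphic embedding; $\mathcal{A}X$ is the closure of $i(X)$ in the product $[-\infty,\infty]^{A(X)}$ (a compact Hausdorff space), and $X$ is identified with $i(X)\subseteq\mathcal{A}X$. Points $x\in\mathcal{A}X$ are functions on $A(X)$, and $x(f)$ denotes the value at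 $f$; the map $\hat f:\mathcal{A}X\to[-\infty,\infty]$, $\hat f(x)=x(f)$, is the unique continuous extension of $f$. *)

From HB Require Import structures.
From mathcomp Require Import all_boot all_order all_algebra.
From mathcomp Require Import all_classical all_reals all_analysis.
Set Implicit Arguments. Unset Strict Implicit. Unset Printing Implicit Defensive.
Import Order.TTheory GRing.Theory Num.Theory numFieldNormedType.Exports.
Local Open Scope classical_set_scope.
Local Open Scope ring_scope.

Definition subspace_of_C (R : realType) (X : topologicalType)
  (A : set (X -> R)) : Prop :=
  [/\ (forall f, A f -> continuous f),
      A (fun _ => 0),
      (forall f g, A f -> A g -> A (f \+ g)) &
      (forall (c : R) f, A f -> A (fun x => c * f x))].

Definition separates_points_closed (R : realType) (X : topologicalType)
  (A : set (X -> R)) : Prop :=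
  forall (x : X) (F : set X), closed F -> ~ F x ->
    exists2 f, A f & f x = 1 /\ (forall y, F y -> f y = 0).

Definition adequate (R : realType) (X : topologicalType)
  (A : set (X -> R)) : Prop :=
  [/\ separates_points_closed A /\ (forall c : R, A (fun _ => c)),
      (exists g : R -> R, [/\ continuous g, {homo g : s t / s <= t},
          (forall t, t <= 0 -> g t = 0), (forall t, 1 <= t -> g t = 1) &
          (forall f, A f -> A (g \o f))]) &
      (forall f, A f -> exists f1 f2, [/\ A f1, A f2,
          (forall x, 0 <= f1 x), (forall x, 0 <= f2 x) &
          f = f1 \- f2])].

Definition Aidx (R : realType) (X : topologicalType) (A : set (X -> R)) :=
  {f : X -> R | A f}.

Definition Aeval (R : realType) (X : topologicalType) (A : set (X -> R))
  (x : X) : {ptws Aidx A -> \bar R} :=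
  fun f => ((proj1_sig f) x)%:E.

Definition Acompact (R : realType) (X : topologicalType) (A : set (X -> R))
  : set {ptws Aidx A -> \bar R} :=
  closure (range (@Aeval R X A)).
Arguments Acompact {R X} A _.
Arguments Aeval {R X} A x _.

(* Only the value x(f) matters, so it suffices to find a continuous
   H : R -> R, constant near -oo and +oo, with H(x0 f) = 0, 0 <= H <= 1 and
   H < 1 only on U. It can be built from the function g of adequacy as a sum
   of terms g (c t + d): for finite x0 f take H t = g (|t - x0 f| / e), near
   an infinite one a single increasing or decreasing ramp. Then h := H o f
   lies in A(X), and since x |-> x(h) and x |-> H(x(f)) (H extended to
   [-oo, +oo] by its constant values) are continuous and agree on the dense
   image of X, they agree on the whole compactification. *)
From HB Require Import structures.
From mathcomp Require Import all_boot all_order all_algebra.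
From mathcomp Require Import all_classical all_reals all_analysis.
From mathcomp Require Import ring lra.
Import Order.TTheory GRing.Theory Num.Theory numFieldNormedType.Exports.
Local Open Scope classical_set_scope.
Local Open Scope ring_scope.

Lemma continuous_eq_closure (T U : topologicalType) (F G : T -> U) (S : set T) :
  hausdorff_space U -> continuous F -> continuous G ->
  (forall x, S x -> F x = G x) -> forall x, closure S x -> F x = G x.
Proof.
move=> hU cF cG FG x Sx; apply: hU => B C FB GC.
have FB' : nbhs x (F @^-1` B) := cF x B FB.
have GC' : nbhs x (G @^-1` C) := cG x C GC.
have [z [Sz [Bz Cz]]] := Sx _ (filterI FB' GC').
by exists (F z); split => //; rewrite FG.
Qed.

Section ErealExtend.
Context {R : realType}.

Definition ereal_extend (H : R -> R) (l r : R) (y : \bar R) : \bar R :=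
  match y with EFin t => (H t)%:E | +oo%E => r%:E | -oo%E => l%:E end.

Definition flat_at_infty (H : R -> R) (l r : R) :=
  (\forall t \near -oo, H t = l) /\ (\forall t \near +oo, H t = r).

Lemma ereal_extend_continuous (H : R -> R) (l r : R) : continuous H ->
  flat_at_infty H l r -> continuous (ereal_extend H l r).
Proof.
move=> cH [[a [a_real Ha]] [b [b_real Hb]]] [t| |] B /= HB.
- exact: (cH t _ HB).
- exists b; split=> // -[s| |] //= bs; last exact: nbhs_singleton.
  by rewrite Hb //; apply: nbhs_singleton.
- exists a; split=> // -[s| |] //= sa; last exact: nbhs_singleton.
  by rewrite Ha //; apply: nbhs_singleton.
Qed.

Definition ereal_cutoff (y : \bar R) (U : set \bar R) (H : R -> R) (l r : R) :=
  [/\ continuous H, flat_at_infty H l r, (forall t, 0 <= H t <= 1),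
      ereal_extend H l r y = 0%E &
      forall z, (ereal_extend H l r z < 1%:E)%E -> U z].

End ErealExtend.

Section Cutoff.
Context {R : realType} {g : R -> R}.
Hypotheses (g_cont : continuous g) (g_homo : {homo g : s t / s <= t}).
Hypotheses (g_le0 : forall t, t <= 0 -> g t = 0)
           (g_ge1 : forall t, 1 <= t -> g t = 1).
Context {P : set (R -> R)}.
Hypotheses (P_affine : forall c d, P (fun t => g (c * t + d)))
           (P_add : forall H1 H2, P H1 -> P H2 -> P (H1 \+ H2)).

Lemma g_ge0_le1 (t : R) : 0 <= g t <= 1.
Proof.
have [g0 g1] : g 0 = 0 /\ g 1 = 1 by split; [exact: g_le0 | exact: g_ge1].
case: (lerP t 0) => [t_le0|t_gt0]; first by rewrite g_le0 // lexx ler01.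
case: (lerP 1 t) => [t_ge1|t_lt1]; first by rewrite g_ge1 // lexx ler01.
by rewrite -{1}g0 -g1 !g_homo // ltW.
Qed.

Lemma g_lt1 (t : R) : g t < 1 -> t < 1.
Proof. by case: (lerP 1 t) => // t_ge1; rewrite g_ge1 // ltxx. Qed.

Lemma gD_oppr (t : R) : g t + g (- t) = g `|t|.
Proof.
case: (lerP 0 t) => [t_ge0|t_lt0].
  by rewrite ger0_norm // [g (- t)]g_le0 ?addr0 // oppr_le0.
by rewrite ltr0_norm // g_le0 ?add0r // ltW.
Qed.

Lemma continuous_g_affine (c d : R) : continuous (fun t => g (c * t + d)).
Proof.
move=> t; apply: continuous_comp; last exact: g_cont.
by apply: cvgD; [apply: cvgM; [exact: cvg_cst | exact: cvg_id] | exact: cvg_cst].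
Qed.

Lemma ereal_cutoff_fin (r : R) (U : set \bar R) : nbhs r%:E U ->
  exists H, P H /\ ereal_cutoff r%:E U H 1 1.
Proof.
move=> rU; have /nbhs_ballP [e /= e_gt0 reU] : nbhs r (fun t => U t%:E) := rU.
pose H t := g (`|t - r| / e).
have H_ge1 t : e <= `|t - r| -> H t = 1.
  by move=> et; rewrite /H g_ge1 // ler_pdivlMr // mul1r.
exists H; split.
  suff -> : H = (fun t => g (e^-1 * t + - (r / e))) \+
                (fun t => g (- e^-1 * t + r / e)) by exact: P_add.
  apply/funext => t /=.
  rewrite /H -[e in _ / e]gtr0_norm // -normf_div -gD_oppr.
  by congr (g _ + g _); field; rewrite gt_eqF.
split.
- move=> t; apply: continuous_comp; last exact: g_cont.
  by apply: cvgM; [apply: cvg_norm; apply: cvgB; [exact: cvg_id | exact: cvg_cst]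
                  | exact: cvg_cst].
- split; [exists (r - e) | exists (r + e)]; split=> [|t t_near];
    do ?exact: num_real; apply: H_ge1.
    by rewrite ltr0_norm; lra.
  by rewrite gtr0_norm; lra.
- by move=> t; apply: g_ge0_le1.
- by rewrite /= /H subrr normr0 mul0r g_le0.
- move=> [t| |] /=; rewrite ?lte_fin ?ltxx // => /g_lt1.
  by rewrite ltr_pdivrMr // mul1r distrC => /reU.
Qed.

Lemma ereal_cutoff_pinfty (U : set \bar R) : nbhs +oo%E U ->
  exists H, P H /\ ereal_cutoff +oo%E U H 1 0.
Proof.
move=> [M [M_real MU]].
pose H t := g (-1 * t + (M + 1)).
exists H; split; first exact: P_affine.
split.
- exact: continuous_g_affine.
- split; first by exists M; split=> // t tM; rewrite /H g_ge1 //; lra.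
  exists (M + 1); split=> [|t tM]; first exact: num_real.
  by rewrite /H g_le0 //; lra.
- by move=> t; apply: g_ge0_le1.
- by [].
- case=> [t| |] /=; rewrite lte_fin ?ltxx //.
    by move=> /g_lt1 tM; apply: MU; rewrite lte_fin; lra.
  by move=> _; apply: MU; rewrite ltry.
Qed.

Lemma ereal_cutoff_ninfty (U : set \bar R) : nbhs -oo%E U ->
  exists H, P H /\ ereal_cutoff -oo%E U H 0 1.
Proof.
move=> [M [M_real MU]].
pose H t := g (1 * t + (1 - M)).
exists H; split; first exact: P_affine.
split.
- exact: continuous_g_affine.
- split.
    exists (M - 1); split=> [|t tM]; first exact: num_real.
    by rewrite /H g_le0 //; lra.
  by exists M; split=> // t tM; rewrite /H g_ge1 //; lra.
- by move=> t; apply: g_ge0_le1.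
- by [].
- case=> [t| |] /=; rewrite lte_fin ?ltxx //.
    by move=> /g_lt1 tM; apply: MU; rewrite lte_fin; lra.
  by move=> _; apply: MU; rewrite ltNyr.
Qed.

Lemma exists_ereal_cutoff (y : \bar R) (U : set \bar R) : nbhs y U ->
  exists H l r, P H /\ ereal_cutoff y U H l r.
Proof.
case: y => [r /ereal_cutoff_fin|/ereal_cutoff_pinfty|/ereal_cutoff_ninfty];
  by move=> [H PH]; do 3!eexists; exact: PH.
Qed.

End Cutoff.

Section Compactification.
Variables (R : realType) (X : topologicalType) (A : set (X -> R)).

(* [proj_continuous] requires the index type of the product to be an eqType. *)
HB.instance Definition _ := gen_eqMixin (Aidx A).

Lemma Acompact_comp (phi psi : Aidx A) (H : R -> R) (l r : R) :
  continuous H -> flat_at_infty H l r ->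
  proj1_sig psi = H \o proj1_sig phi ->
  forall x, Acompact A x -> x psi = ereal_extend H l r (x phi).
Proof.
move=> cH H_flat psiE; apply: continuous_eq_closure.
- exact: ereal_hausdorff.
- exact: proj_continuous.
- move=> x; apply: continuous_comp; first exact: proj_continuous.
  exact: ereal_extend_continuous.
- by move=> _ [z _ <-]; rewrite /= /Aeval psiE.
Qed.

End Compactification.

Theorem lemma3p2 (R : realType) (X : topologicalType)
  (HcrX : completely_regular_space X) (HhX : hausdorff_space X)
  (A : set (X -> R)) (HsubA : subspace_of_C A) (HadA : adequate A)
  (x0 : {ptws Aidx A -> \bar R}) (Hx0 : Acompact A x0)
  (f : Aidx A) (U : set (\bar R)) (HU : nbhs (x0 f) U) :
  exists h : Aidx A,
    [/\ (forall x : X, 0 <= proj1_sig h x <= 1),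
        x0 h = 0%E &
        (forall x : {ptws Aidx A -> \bar R},
           Acompact A x -> (x h < 1%:E)%E -> U (x f))].
Proof.
case: HsubA => _ _ A_add A_scale.
case: HadA => [[_ A_cst] [g [g_cont g_homo g_le0 g_ge1 A_g]] _].
pose P H := A (H \o proj1_sig f).
have P_affine c d : P (fun t => g (c * t + d)).
  exact: A_g _ (A_add _ _ (A_scale c _ (proj2_sig f)) (A_cst d)).
have P_add H1 H2 : P H1 -> P H2 -> P (H1 \+ H2) by exact: A_add.
have [H [l [r [PH [H_cont H_flat H01 Hx0f HUf]]]]] :=
  exists_ereal_cutoff g_cont g_homo g_le0 g_ge1 P_affine P_add _ _ HU.
pose h : Aidx A := exist A (H \o proj1_sig f) PH.
have hE x : Acompact A x -> x h = ereal_extend H l r (x f).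
  by apply: Acompact_comp.
exists h; split.
- by move=> x; exact: H01.
- by rewrite hE.
- by move=> x Ax; rewrite hE // => /HUf.
Qed.
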